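(* Let $T$ be a first-order $\mathscr L$-theory and $A$ a model of $T_\forall$. Then $A$ is existentially closed in $\mathcal U_{\mathcal K}=\mathrm{Mod}(T_\forall)$ if and only if $A^*$ is geometrically closed in $\mathcal U_{\mathcal K}^*=\mathrm{Mod}(T_\forall\cup\emptyset^* )$.
   Context: $T_\forall$: consequences of $T$ of the form $\forall\bar y(\bigwedge\Phi\to\bigvee\Psi)$, $\Phi,\Psi$ finite sets of atomic formulas. $A$ is existentially closed in a class $\mathcal C$ if every embedding of $A$ into a member of $\mathcal C$ reflects existential sentences with parameters from $A$. $\mathscr L^*$ is $\mathscr L$ plus, for each relation symbol $R$ of $\mathscr L$, a new relation symbol $R^*$ of the same arity; $\emptyset^*$ is the set of axioms $\forall\bar x(\neg R(\bar x)\leftrightarrow R^*(\bar x))$; $T^*=T\cup\emptyset^*$ (and $T_\forall\cup\emptyset^*$ is equivalent to $(T^* )_\forall$). $A^*$ is the expansion of $A$ interpreting each $R^*$ as the complement of $R$. A homomorphism $f:C\to D$ is geometrically closed if every sentence $\forall\bar y\,(\bigwedge\Phi(\bar c,\bar y)\to\psi(\bar c,\bar y))$ ($\Phi\cup\{\psi\}$ finite sets of atomic formulas, parameters from $C$) true in $C$ holds in $D$ of $f\bar c$; $C$ is geometrically closed in a class if every homomorphism from $C$ to a member of that class is. *)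

From mathcomp Require Import all_boot.
Set Implicit Arguments. Unset Strict Implicit. Unset Printing Implicit Defensive.

Record signature := Signature {
  funsym : Type; fun_ar : funsym -> nat;
  relsym : Type; rel_ar : relsym -> nat }.

Section Syntax.
Variable L : signature.

Inductive term : Type :=
| tvar : nat -> term
| tapp (f : funsym L) : ('I_(fun_ar f) -> term) -> term.

Inductive atom : Type :=
| AEq : term -> term -> atom
| ARel (r : relsym L) : ('I_(rel_ar r) -> term) -> atom.

Inductive formula : Type :=
| FAtom : atom -> formula
| FFal : formula
| FImp : formula -> formula -> formula
| FAnd : formula -> formula -> formula
| FOr : formula -> formula -> formula
| FAll : nat -> formula -> formula
| FEx : nat -> formula -> formula.

Definition FTrue := FImp FFal FFal.
Definition FNot (p : formula) := FImp p FFal.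
Definition FIff (p q : formula) := FAnd (FImp p q) (FImp q p).
Definition bigAnd (s : seq formula) := foldr FAnd FTrue s.
Definition bigOr (s : seq formula) := foldr FOr FFal s.
Definition closeAll (ys : seq nat) (p : formula) := foldr FAll p ys.
Definition closeEx (ys : seq nat) (p : formula) := foldr FEx p ys.

Fixpoint occurs (x : nat) (t : term) : Prop :=
  match t with
  | tvar n => x = n
  | tapp f a => exists i, occurs x (a i)
  end.

Definition occurs_atom (x : nat) (a : atom) : Prop :=
  match a with
  | AEq t1 t2 => occurs x t1 \/ occurs x t2
  | ARel r a => exists i, occurs x (a i)
  end.

Fixpoint free (x : nat) (p : formula) : Prop :=
  match p with
  | FAtom a => occurs_atom x a
  | FFal => False
  | FImp p q | FAnd p q | FOr p q => free x p \/ free x q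
  | FAll y p | FEx y p => x <> y /\ free x p
  end.

Definition closed (p : formula) := forall x, ~ free x p.

Fixpoint qf (p : formula) : Prop :=
  match p with
  | FAtom _ | FFal => True
  | FImp p q | FAnd p q | FOr p q => qf p /\ qf q
  | FAll _ _ | FEx _ _ => False
  end.

Definition existential (p : formula) :=
  exists ys psi, qf psi /\ p = closeEx ys psi.

Record structure := Structure {
  dom : Type;
  dom_inh : inhabited dom;
  interp_fun : forall f : funsym L, ('I_(fun_ar f) -> dom) -> dom;
  interp_rel : forall r : relsym L, ('I_(rel_ar r) -> dom) -> Prop }.

Fixpoint eval (M : structure) (rho : nat -> dom M) (t : term) : dom M :=
  match t with
  | tvar n => rho n
  | tapp f a => @interp_fun M f (fun i => eval rho (a i))
  end.

Definition update (M : structure) (rho : nat -> dom M) (x : nat) (d : dom M) :=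
  fun n => if n == x then d else rho n.

Definition sat_atom (M : structure) (rho : nat -> dom M) (a : atom) : Prop :=
  match a with
  | AEq t1 t2 => eval rho t1 = eval rho t2
  | ARel r args => @interp_rel M r (fun i => eval rho (args i))
  end.

Fixpoint sat (M : structure) (rho : nat -> dom M) (p : formula) : Prop :=
  match p with
  | FAtom a => sat_atom rho a
  | FFal => False
  | FImp p q => sat rho p -> sat rho q
  | FAnd p q => sat rho p /\ sat rho q
  | FOr p q => sat rho p \/ sat rho q
  | FAll x p => forall d, sat (update rho x d) p
  | FEx x p => exists d, sat (update rho x d) p
  end.

(* M |= p (universal closure; for sentences the usual truth) *)
Definition holds (M : structure) (p : formula) := forall rho : nat -> dom M, sat rho p.
Definition models (M : structure) (Th : formula -> Prop) :=
  forall p, Th p -> holds M p.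
Definition entails (Th : formula -> Prop) (p : formula) :=
  forall M : structure, models M Th -> holds M p.

Definition theory (T : formula -> Prop) := forall p, T p -> closed p.

Definition Tforall (T : formula -> Prop) (p : formula) :=
  closed p /\ entails T p /\
  exists (ys : seq nat) (Phi Psi : seq atom),
    p = closeAll ys (FImp (bigAnd (map FAtom Phi)) (bigOr (map FAtom Psi))).

Definition embedding (A B : structure) (f : dom A -> dom B) :=
  injective f /\
  (forall (g : funsym L) a, f (@interp_fun A g a) = @interp_fun B g (f \o a)) /\
  (forall (r : relsym L) a, @interp_rel A r a <-> @interp_rel B r (f \o a)).

Definition homomorphism (A B : structure) (f : dom A -> dom B) :=
  (forall (g : funsym L) a, f (@interp_fun A g a) = @interp_fun B g (f \o a)) /\
  (forall (r : relsym L) a, @interp_rel A r a -> @interp_rel B r (f \o a)).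

(* A is existentially closed in the class K: every embedding of A into a
   member of K reflects existential sentences with parameters from A
   (parameters = values of the free variables, given by rho). *)
Definition ex_closed_in (K : structure -> Prop) (A : structure) :=
  forall B, K B -> forall f : dom A -> dom B, embedding f ->
  forall (p : formula) (rho : nat -> dom A),
    existential p -> sat (f \o rho) p -> sat rho p.

Definition geom (ys : seq nat) (Phi : seq atom) (psi : atom) :=
  closeAll ys (FImp (bigAnd (map FAtom Phi)) (FAtom psi)).

Definition geom_closed_hom (C D : structure) (f : dom C -> dom D) :=
  forall ys Phi psi (rho : nat -> dom C),
    sat rho (geom ys Phi psi) -> sat (f \o rho) (geom ys Phi psi).

Definition geom_closed_in (K : structure -> Prop) (C : structure) :=
  forall D, K D -> forall f : dom C -> dom D, homomorphism f ->
    geom_closed_hom f.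

End Syntax.

Arguments tvar {L}.

(* Relation symbols of L^*: those of L, a starred copy R^* of each, and the
   starred copy =^* of equality (equality treated as a relation symbol). *)
Inductive star_rel (R : Type) : Type :=
| SOrig : R -> star_rel R
| SStar : R -> star_rel R
| SEqStar : star_rel R.
Arguments SEqStar {R}.

Definition star_ar (L : signature) (r : star_rel (relsym L)) : nat :=
  match r with
  | SOrig r => rel_ar r
  | SStar r => rel_ar r
  | SEqStar => 2
  end.

Definition star_sig (L : signature) : signature :=
  @Signature (funsym L) (@fun_ar L) (star_rel (relsym L)) (@star_ar L).

Section Star.
Variable L : signature.

Fixpoint tr_term (t : term L) : term (star_sig L) :=
  match t with
  | tvar n => tvar n
  | tapp f a => @tapp (star_sig L) f (fun i => tr_term (a i))
  end.

Definition tr_atom (a : atom L) : atom (star_sig L) :=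
  match a with
  | AEq t1 t2 => AEq (tr_term t1) (tr_term t2)
  | ARel r args => @ARel (star_sig L) (SOrig r) (fun i => tr_term (args i))
  end.

Fixpoint tr_form (p : formula L) : formula (star_sig L) :=
  match p with
  | FAtom a => FAtom (tr_atom a)
  | FFal => FFal _
  | FImp p q => FImp (tr_form p) (tr_form q)
  | FAnd p q => FAnd (tr_form p) (tr_form q)
  | FOr p q => FOr (tr_form p) (tr_form q)
  | FAll x p => FAll x (tr_form p)
  | FEx x p => FEx x (tr_form p)
  end.

Definition var_args (n : nat) : 'I_n -> term (star_sig L) :=
  fun i => tvar (nat_of_ord i).

(* The axioms emptyset^* : forall xs (~ R(xs) <-> R^*(xs)), including R = (=). *)
Definition emptystar (p : formula (star_sig L)) : Prop :=
  (exists r : relsym L,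
     p = closeAll (iota 0 (rel_ar r))
           (FIff (FNot (FAtom (@ARel (star_sig L) (SOrig r) (@var_args (rel_ar r)))))
                 (FAtom (@ARel (star_sig L) (SStar r) (@var_args (rel_ar r))))))
  \/ p = closeAll [:: 0; 1]
           (FIff (FNot (FAtom (AEq (tvar 0) (tvar 1))))
                 (FAtom (@ARel (star_sig L) SEqStar (@var_args 2)))).

Definition Tforall_star (T : formula L -> Prop) (p : formula (star_sig L)) :=
  (exists q, Tforall T q /\ p = tr_form q) \/ emptystar p.

Definition star_struct (A : structure L) : structure (star_sig L) :=
  @Structure (star_sig L) (dom A) (dom_inh A) (@interp_fun L A)
    (fun r => match r return ('I_(star_ar r) -> dom A) -> Prop with
              | SOrig r => @interp_rel L A r
              | SStar r => fun a => ~ @interp_rel L A r a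
              | SEqStar => fun a => a ord0 <> a (@ord_max 1)
              end).

Definition UK (T : formula L -> Prop) (B : structure L) := models B (Tforall T).
Definition UKstar (T : formula L -> Prop) (D : structure (star_sig L)) :=
  models D (Tforall_star T).

End Star.

(** For a homomorphism [f : A^* -> D] into a model of [T_forall \cup emptyset^*],
    preserving the starred symbols means reflecting the original ones, so [f] is an
    embedding of [A] into the [L]-reduct of [D]; conversely an embedding [A -> B]
    is a homomorphism [A^* -> B^*].  A geometric sentence [forall ys (/\ Phi -> psi)]
    fails exactly when [exists ys (/\ Phi /\ ~ psi)] holds, and reading starred
    atoms as negated [L]-atoms this is an existential [L]-sentence.  Conversely,
    an existential [L]-formula [exists ys psi] is, after putting [psi] in disjunctive
    normal form with negated atoms replaced by starred ones, a disjunction of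
    negated geometric sentences [forall ys (/\ Phi -> _|_)], where [_|_] is the
    atom [x <>^* x].  So reflection of existential [L]-sentences along embeddings
    and preservation of geometric [L^*]-sentences along homomorphisms coincide. *)
From Stdlib Require Import Classical FunctionalExtensionality.
From Stdlib Require List.
From mathcomp Require Import all_boot.
Set Implicit Arguments. Unset Strict Implicit. Unset Printing Implicit Defensive.

Section Satisfaction.
Variables (L : signature) (M : structure L).

Definition eq_off (xs : seq nat) (rho rho' : nat -> dom M) :=
  forall n, n \notin xs -> rho' n = rho n.

Lemma sat_closeAll xs p (rho : nat -> dom M) :
  sat rho (closeAll xs p) <-> forall rho', eq_off xs rho rho' -> sat rho' p.
Proof.
elim: xs rho => [|x xs IH] rho /=.
  split => [Hp rho' Hoff|]; last by apply; move=> n.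
  by have -> : rho' = rho by apply: functional_extensionality => n; exact: Hoff.
split => [Hp rho' Hoff|Hp d].
  apply: (proj1 (IH (update rho x (rho' x))) (Hp (rho' x))) => n Hn.
  rewrite /update; case: eqP => [->//|/eqP Hnx].
  by apply: Hoff; rewrite in_cons negb_or Hnx.
apply/IH => rho' Hoff; apply: Hp => n; rewrite in_cons negb_or => /andP[Hnx Hn].
by rewrite Hoff // /update (negbTE Hnx).
Qed.

Lemma sat_closeEx xs p (rho : nat -> dom M) :
  sat rho (closeEx xs p) <-> exists2 rho', eq_off xs rho rho' & sat rho' p.
Proof.
elim: xs rho => [|x xs IH] rho /=.
  split => [Hp|[rho' Hoff Hp]]; first by exists rho => // n.
  by have <- : rho' = rho by apply: functional_extensionality => n; exact: Hoff.
split => [[d /IH [rho' Hoff Hp]]|[rho' Hoff Hp]].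
  exists rho' => // n; rewrite in_cons negb_or => /andP[Hnx Hn].
  by rewrite Hoff // /update (negbTE Hnx).
exists (rho' x); apply/IH; exists rho' => // n Hn.
rewrite /update; case: eqP => [->//|/eqP Hnx].
by apply: Hoff; rewrite in_cons negb_or Hnx.
Qed.

Lemma sat_bigAnd (rho : nat -> dom M) (s : seq (formula L)) :
  sat rho (bigAnd s) <-> forall p, List.In p s -> sat rho p.
Proof.
elim: s => [|p s IH] /=; first by split.
by rewrite IH; split => [[Hp Hs] q [<-|/Hs]|Hs] //; split => [|q Hq]; apply: Hs; auto.
Qed.

Lemma sat_bigAnd_atoms (rho : nat -> dom M) (Phi : seq (atom L)) :
  sat rho (bigAnd (map (@FAtom L) Phi)) <-> forall a, List.In a Phi -> sat_atom rho a.
Proof.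
rewrite sat_bigAnd; split => [Hs a Ha|HPhi p /List.in_map_iff [a [<- Ha]]].
  by apply: (Hs (FAtom a)); apply: List.in_map.
exact: HPhi.
Qed.

Lemma sat_not_geom ys Phi psi (rho : nat -> dom M) :
  ~ sat rho (geom ys Phi psi) <->
  exists2 rho', eq_off ys rho rho' &
    (forall a, List.In a Phi -> sat_atom rho' a) /\ ~ sat_atom rho' psi.
Proof.
rewrite sat_closeAll; split => [Hn|[rho' Hoff [HPhi Hpsi]] Hall]; last first.
  by apply/Hpsi/(Hall _ Hoff)/sat_bigAnd_atoms.
apply: NNPP => Hno; apply: Hn => rho' Hoff /sat_bigAnd_atoms HPhi /=.
by apply: NNPP => Hpsi; apply: Hno; exists rho'.
Qed.

End Satisfaction.

Section StarLanguage.
Variable L : signature.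
Local Notation Ls := (star_sig L).

Definition star_reduct (D : structure Ls) : structure L :=
  @Structure L (dom D) (dom_inh D) (@interp_fun Ls D)
    (fun r => @interp_rel Ls D (SOrig r)).

Lemma sat_star_reduct (A : structure L) (rho : nat -> dom A) (p : formula L) :
  sat (M := star_reduct (star_struct A)) rho p <-> sat (M := A) rho p.
Proof. by move: rho; case: A => d i f r rho; exact: iff_refl. Qed.

Lemma eval_tr_term (D : structure Ls) (rho : nat -> dom D) (t : term L) :
  eval (M := D) rho (tr_term t) = eval (M := star_reduct D) rho t.
Proof.
elim: t => [n|f a IH] //=; congr interp_fun.
by apply: functional_extensionality => i; exact: IH.
Qed.

Lemma sat_tr_form (D : structure Ls) (rho : nat -> dom D) (p : formula L) :
  sat (M := D) rho (tr_form p) <-> sat (M := star_reduct D) rho p.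
Proof.
elim: p rho => [[t1 t2|r args]|//|p IHp q IHq|p IHp q IHq|p IHp q IHq|x p IH|x p IH]
  rho /=; rewrite ?IHp ?IHq //.
- by rewrite !eval_tr_term.
- have -> // : (fun i => eval (M := D) rho (tr_term (args i))) =
               (fun i => eval (M := star_reduct D) rho (args i)).
  by apply: functional_extensionality => i; exact: eval_tr_term.
- by split => Hp d; apply/IH; exact: Hp.
- by split => -[d Hp]; exists d; apply/IH; exact: Hp.
Qed.

Definition star_compl (D : structure Ls) :=
  (forall (r : relsym L) (a : 'I_(rel_ar r) -> dom D),
     @interp_rel Ls D (SStar r) a <-> ~ @interp_rel Ls D (SOrig r) a) /\
  (forall a : 'I_2 -> dom D, @interp_rel Ls D SEqStar a <-> a ord0 <> a ord_max).

Lemma star_compl_star_struct (A : structure L) : star_compl (star_struct A).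
Proof. by []. Qed.

Lemma star_compl_of_emptystar (D : structure Ls) :
  (forall p, emptystar p -> holds D p) -> star_compl D.
Proof.
case: (dom_inh D) => d0 Hax; split => [r a|a].
- pose rho k := if insub k is Some i then a (i : 'I_(rel_ar r)) else d0.
  have /sat_closeAll/(_ rho (fun _ _ => erefl)) :=
    Hax _ (or_introl (ex_intro _ r erefl)) rho.
  rewrite /= /var_args /=; have -> : (fun i : 'I_(rel_ar r) => rho i) = a.
    by apply: functional_extensionality => i; rewrite /rho valK.
  by move=> /= [Hto Hfrom]; split => [/Hfrom|/Hto].
- pose rho k := if k == 0 then a ord0 else a ord_max.
  have /sat_closeAll/(_ rho (fun _ _ => erefl)) := Hax _ (or_intror erefl) rho.
  rewrite /= /var_args /=; have -> : (fun i : 'I_2 => rho i) = a.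
    apply: functional_extensionality => -[[|[|m]] Hm] //=;
      by rewrite /rho /=; congr a; apply: val_inj.
  by move=> /= [Hto Hfrom]; split => [/Hfrom|/Hto].
Qed.

Section Models.
Variable T : formula L -> Prop.

Lemma star_compl_of_UKstar (D : structure Ls) : UKstar T D -> star_compl D.
Proof. by move=> HD; apply: star_compl_of_emptystar => p Hp; apply: HD; right. Qed.

Lemma UK_star_reduct (D : structure Ls) : UKstar T D -> UK T (star_reduct D).
Proof. by move=> HD q Hq rho; apply/sat_tr_form; apply: HD; left; exists q. Qed.

Lemma UKstar_star_struct (B : structure L) : UK T B -> UKstar T (star_struct B).
Proof.
move=> HB p [[q [Hq ->]] rho|[[r ->]|->] rho].
- by apply/sat_tr_form/sat_star_reduct; exact: HB.
- by apply/sat_closeAll => rho' _ /=; split.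
- by apply/sat_closeAll => rho' _ /=; split.
Qed.

End Models.

Lemma embedding_of_star_hom (A : structure L) (D : structure Ls) (f : dom A -> dom D) :
  star_compl D -> homomorphism (B := D) (A := star_struct A) f ->
  embedding (A := A) (B := star_reduct D) f.
Proof.
move=> [Dstar Dneq] [Hfun Hrel]; split; [|split] => //.
- move=> x y Exy; apply: NNPP => Hxy.
  have /Dneq/= := Hrel SEqStar (fun i : 'I_2 => if val i == 0 then x else y) Hxy.
  by rewrite Exy.
- move=> r a; split; first exact: Hrel (SOrig r) a.
  by move=> Ha; apply: NNPP => /(Hrel (SStar r))/Dstar.
Qed.

Lemma star_hom_of_embedding (A B : structure L) (f : dom A -> dom B) :
  embedding f -> homomorphism (A := star_struct A) (B := star_struct B) f.
Proof.
move=> [Hinj [Hfun Hrel]]; split => // -[r|r|] a /=.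
- exact: (Hrel r a).1.
- by move=> Hn /(Hrel r a).2.
- by move=> Hneq /Hinj.
Qed.

Fixpoint untr_term (t : term Ls) : term L :=
  match t with
  | tvar n => tvar n
  | @tapp _ f a => @tapp L f (fun i => untr_term (a i))
  end.

Lemma eval_untr_term (D : structure Ls) (rho : nat -> dom D) (t : term Ls) :
  eval (M := star_reduct D) rho (untr_term t) = eval (M := D) rho t.
Proof.
elim: t => [n|f a IH] //=; congr interp_fun.
by apply: functional_extensionality => i; exact: IH.
Qed.

Definition unstar_atom (a : atom Ls) : formula L :=
  match a with
  | AEq t1 t2 => FAtom (AEq (untr_term t1) (untr_term t2))
  | @ARel _ r args =>
    match r as r0 return ('I_(star_ar r0) -> term Ls) -> formula L with
    | SOrig r => fun args => FAtom (@ARel L r (fun i => untr_term (args i)))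
    | SStar r => fun args => FNot (FAtom (@ARel L r (fun i => untr_term (args i))))
    | SEqStar => fun args =>
        FNot (FAtom (AEq (untr_term (args ord0)) (untr_term (args ord_max))))
    end args
  end.

Lemma qf_unstar_atom a : qf (unstar_atom a).
Proof. by case: a => [t1 t2|[r|r|] args]. Qed.

Lemma sat_unstar_atom (D : structure Ls) (rho : nat -> dom D) (a : atom Ls) :
  star_compl D -> (sat (M := star_reduct D) rho (unstar_atom a) <-> sat_atom rho a).
Proof.
move=> [Dstar Dneq].
have Eargs n (args : 'I_n -> term Ls) :
    (fun i => eval (M := star_reduct D) rho (untr_term (args i))) =
    (fun i => eval rho (args i)).
  by apply: functional_extensionality => i; exact: eval_untr_term.
case: a => [t1 t2|[r|r|] args] /=; rewrite ?Eargs ?eval_untr_term //.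
- by rewrite Dstar.
- by rewrite Dneq.
Qed.

Lemma qf_bigAnd_unstar Phi : qf (bigAnd (map unstar_atom Phi)).
Proof. by elim: Phi => [|a Phi IH] //=; split => //; apply: qf_unstar_atom. Qed.

Lemma sat_bigAnd_unstar (D : structure Ls) (rho : nat -> dom D) Phi :
  star_compl D ->
  (sat (M := star_reduct D) rho (bigAnd (map unstar_atom Phi)) <->
   forall a, List.In a Phi -> sat_atom rho a).
Proof.
move=> Dc; rewrite sat_bigAnd; split => [Hs a Ha|HPhi p /List.in_map_iff [a [<- Ha]]].
  by apply/(sat_unstar_atom _ _ Dc)/Hs/List.in_map.
exact/(sat_unstar_atom _ _ Dc)/HPhi.
Qed.

Definition geom_counterexample ys Phi psi : formula L :=
  closeEx ys (FAnd (bigAnd (map unstar_atom Phi)) (FNot (unstar_atom psi))).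

Lemma existential_geom_counterexample ys Phi psi :
  existential (geom_counterexample ys Phi psi).
Proof.
by do 2 eexists; split; last reflexivity;
  split; [apply: qf_bigAnd_unstar | split => //; apply: qf_unstar_atom].
Qed.

Lemma sat_geom_counterexample (D : structure Ls) (rho : nat -> dom D) ys Phi psi :
  star_compl D ->
  (sat (M := star_reduct D) rho (geom_counterexample ys Phi psi) <->
   ~ sat rho (geom ys Phi psi)).
Proof.
move=> Dc; rewrite sat_not_geom sat_closeEx /=.
split=> -[rho' Hoff [HPhi Hpsi]]; exists rho' => //; split.
- exact/sat_bigAnd_unstar.
- by move/(sat_unstar_atom _ _ Dc).
- exact/sat_bigAnd_unstar.
- by move/(sat_unstar_atom _ _ Dc).
Qed.

Lemma sat_tr_atom (D : structure Ls) (rho : nat -> dom D) (a : atom L) :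
  sat_atom (M := D) rho (tr_atom a) <-> sat_atom (M := star_reduct D) rho a.
Proof. exact: sat_tr_form rho (FAtom a). Qed.

Definition star_atom_neg (a : atom L) : atom Ls :=
  match a with
  | AEq t1 t2 =>
      @ARel Ls SEqStar (fun i : 'I_2 => if val i == 0 then tr_term t1 else tr_term t2)
  | ARel r args => @ARel Ls (SStar r) (fun i => tr_term (args i))
  end.

Lemma sat_star_atom_neg (D : structure Ls) (rho : nat -> dom D) (a : atom L) :
  star_compl D ->
  (sat_atom rho (star_atom_neg a) <-> ~ sat_atom (M := star_reduct D) rho a).
Proof.
move=> [Dstar Dneq]; case: a => [t1 t2|r args] /=.
  by rewrite Dneq /= !eval_tr_term.
by rewrite Dstar; have /= -> := sat_tr_atom rho (ARel args).
Qed.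

Definition sat_clauses (D : structure Ls) (rho : nat -> dom D) (C : seq (seq (atom Ls))) :=
  exists2 Phi, List.In Phi C & forall a, List.In a Phi -> sat_atom rho a.

Definition clause_prod (C C' : seq (seq (atom Ls))) :=
  List.flat_map (fun Phi => List.map (List.app Phi) C') C.

Section Clauses.
Variables (D : structure Ls) (rho : nat -> dom D).

Lemma sat_clauses_app C C' :
  sat_clauses rho (List.app C C') <-> sat_clauses rho C \/ sat_clauses rho C'.
Proof.
split => [[Phi /List.in_app_iff [HC|HC'] HPhi]|[[Phi HC HPhi]|[Phi HC' HPhi]]].
- by left; exists Phi.
- by right; exists Phi.
- by exists Phi => //; apply/List.in_app_iff; left.
- by exists Phi => //; apply/List.in_app_iff; right.
Qed.

Lemma sat_clauses_prod C C' :
  sat_clauses rho (clause_prod C C') <-> sat_clauses rho C /\ sat_clauses rho C'.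
Proof.
split.
  move=> [_ /List.in_flat_map [Phi [HC /List.in_map_iff [Phi' [<- HC']]]] HPhi].
  by split; [exists Phi | exists Phi'] => // a Ha; apply: HPhi; apply/List.in_app_iff; auto.
move=> [[Phi HC HPhi] [Phi' HC' HPhi']]; exists (List.app Phi Phi').
  by apply/List.in_flat_map; exists Phi; split => //; apply: List.in_map.
by move=> a /List.in_app_iff [/HPhi|/HPhi'].
Qed.

Lemma sat_clauses_single a : sat_clauses rho [:: [:: a]] <-> sat_atom rho a.
Proof.
split => [[_ [<-|//] HPhi]|Ha]; first by apply: HPhi; left.
by exists [:: a] => [|b [<-|]]; first left.
Qed.

End Clauses.

(* Disjunctive normal forms of [p] and of [~ p], with [L^*]-atoms as literals. *)
Fixpoint star_dnf (p : formula L) : seq (seq (atom Ls)) * seq (seq (atom Ls)) :=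
  match p with
  | FAtom a => ([:: [:: tr_atom a]], [:: [:: star_atom_neg a]])
  | FFal => ([::], [:: [::]])
  | FImp p q => (List.app (star_dnf p).2 (star_dnf q).1, clause_prod (star_dnf p).1 (star_dnf q).2)
  | FAnd p q => (clause_prod (star_dnf p).1 (star_dnf q).1, List.app (star_dnf p).2 (star_dnf q).2)
  | FOr p q => (List.app (star_dnf p).1 (star_dnf q).1, clause_prod (star_dnf p).2 (star_dnf q).2)
  | _ => ([::], [::])
  end.

Lemma sat_star_dnf (D : structure Ls) (rho : nat -> dom D) (p : formula L) :
  star_compl D -> qf p ->
  (sat (M := star_reduct D) rho p <-> sat_clauses rho (star_dnf p).1) /\
  (~ sat (M := star_reduct D) rho p <-> sat_clauses rho (star_dnf p).2).
Proof.
move=> Dc; elim: p => [a|_|p IHp q IHq|p IHp q IHq|p IHp q IHq|//|//] /=.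
- by rewrite !sat_clauses_single sat_tr_atom sat_star_atom_neg.
- split; first by split => // -[].
  by split => [_|_ []]; exists [::] => //; left.
all: move=> [/IHp [Hp Hnp] /IHq [Hq Hnq]].
all: rewrite sat_clauses_app sat_clauses_prod -Hp -Hnp -Hq -Hnq.
all: by case: (classic (sat (M := star_reduct D) rho p)); tauto.
Qed.

(* Never satisfied when [=^*] means [<>]: it says [x0 <> x0]. *)
Definition star_falsum : atom Ls := @ARel Ls SEqStar (fun _ => tvar 0).

Lemma sat_closeEx_star_dnf (D : structure Ls) (rho : nat -> dom D) ys psi :
  star_compl D -> qf psi ->
  (sat (M := star_reduct D) rho (closeEx ys psi) <->
   exists2 Phi, List.In Phi (star_dnf psi).1 & ~ sat rho (geom ys Phi star_falsum)).
Proof.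
move=> Dc Hqf; rewrite sat_closeEx; split.
  move=> [rho' Hoff /(sat_star_dnf _ Dc Hqf).1 [Phi HPhi Hsat]].
  exists Phi => //; apply/sat_not_geom; exists rho' => //; split => //=.
  by move/(Dc.2 _); apply.
move=> [Phi HPhi /sat_not_geom [rho' Hoff [Hsat _]]].
by exists rho' => //; apply/(sat_star_dnf _ Dc Hqf).1; exists Phi.
Qed.

Section Closure.
Variable T : formula L -> Prop.

Lemma geom_closed_star_of_ex_closed (A : structure L) :
  ex_closed_in (UK T) A -> geom_closed_in (UKstar T) (star_struct A).
Proof.
move=> Hec D HD f Hf ys Phi psi rho Hgeom.
have Dc := star_compl_of_UKstar HD.
apply: NNPP => /(sat_geom_counterexample _ _ _ _ Dc) Hce.
apply: (sat_geom_counterexample rho ys Phi psi (star_compl_star_struct A)).1 Hgeom.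
apply/sat_star_reduct.
exact: Hec _ (UK_star_reduct HD) f (embedding_of_star_hom Dc Hf) _ rho
  (existential_geom_counterexample ys Phi psi) Hce.
Qed.

Lemma ex_closed_of_geom_closed_star (A : structure L) :
  geom_closed_in (UKstar T) (star_struct A) -> ex_closed_in (UK T) A.
Proof.
move=> Hgc B HB f Hf _ rho [ys [psi [Hqf ->]]] /(sat_star_reduct _ _).2.
case/(sat_closeEx_star_dnf _ _ (star_compl_star_struct B) Hqf) => Phi HPhi Hn.
apply/(sat_star_reduct _ _).1/(sat_closeEx_star_dnf _ _ (star_compl_star_struct A) Hqf).
exists Phi => // Hgeom.
exact: Hn (Hgc _ (UKstar_star_struct HB) f (star_hom_of_embedding Hf) ys Phi _ rho Hgeom).
Qed.

End Closure.
End StarLanguage.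

Theorem theorem4p21 (L : signature) (T : formula L -> Prop) (A : structure L) :
  theory T -> models A (Tforall T) ->
  (ex_closed_in (UK T) A <-> geom_closed_in (UKstar T) (star_struct A)).
Proof.
move=> _ _; split.
- exact: geom_closed_star_of_ex_closed.
- exact: ex_closed_of_geom_closed_star.
Qed.
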